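(* Fix $m\le n$. There is a unique bijection $\phi_m$ between the set of complete $m$-chains of $\Pi(n)$ and the set of ordered $(m,n)$-forests that sends a chain $C$ with top element $P$ and Jordan-Hölder permutation $\lambda$ to an ordered forest with priority forest $P$ and priority traversal $\lambda^{-1}$. The bijection $\phi_m$ is explicitly defined as $\phi_m(C) = \lambda^{-1}(P)$.
   Context: An ordered $(m,n)$-forest is a rooted forest with $n+1$ nodes and $m$ edges whose component trees $T_0,\dots,T_{n-m}$ are totally ordered, with roots marked $\circ,\circ_1,\dots,\circ_{n-m}$ recording the order, and whose $m$ non-root vertices are labeled by $[m]=\{1,\dots,m\}$. The priority-first search on an ordered forest starts with only the children of $\circ$ unblocked; at each step it visits the unblocked node with smallest label and unblocks its children; when a component tree is exhausted it moves to the next tree, reads its root and unblocks the root's children. The priority traversal of the forest is the resulting sequence of visited nodes (the initial root $\circ$ is not recorded, and the other roots are recorded as $-$), a partial permutation. The priority forest of an ordered forest is obtained by relabeling its nodes in the order they are visited by priority search, with $\circ$ labeled $0$. In general, a priority forest labeled with $\{0,1,\dots,n\}$ is a rooted forest $(T_0,\dots,T_{n-m})$ whose component trees are increasing and ordered by root labels, such that for $j<k$ every label of $T_j$ is smaller than every label of $T_k$. The priority lattice $\Pi(n)$ consists of all priority forests labeled with $\{0,1,\dots,n\}$ together with an extra top element $\hat 1$, ordered by inclusion of edge sets for priority forests; its bottom element $\hat 0$ is the edgeless forest. For a cover relation $P'\lessdot P$ between priority forests, the edge label $\lambda(P',P)$ is the larger endpoint of the unique edge in $E(P)\setminus E(P')$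 (covers involving $\hat 1$ are unlabeled). A complete $m$-chain is a saturated chain $C:\hat 0=P_0\lessdot P_1\lessdot\cdots\lessdot P_m=P$ of length $m$ starting at $\hat 0$; its Jordan-Hölder permutation is $\lambda(C)=(\lambda(P_0,P_1),\dots,\lambda(P_{m-1},P_m))$, a partial permutation. For such $C$ with top element $P$, $\lambda^{-1}(P)$ denotes the ordered forest obtained by relabeling the non-root vertices of $P$ according to the partial permutation $\lambda(C)^{-1}$ and recording the relative order of the roots in the subscripts of the $\circ$'s. *)

From mathcomp Require Import all_boot.
Set Implicit Arguments. Unset Strict Implicit. Unset Printing Implicit Defensive.

(* A (rooted) forest on the vertex set 'I_n.+1 = {0..n} is given by its *)
(* parent map: P i = Some p iff (p,i) is an edge with p the parent of i; *)
(* P i = None iff i is a root.                                          *)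

Definition forest (n : nat) := {ffun 'I_n.+1 -> option 'I_n.+1}.

(* the root of the component tree containing x (n parent steps suffice
   for increasing forests, whose depth is at most n) *)
Definition froot n (P : forest n) (x : 'I_n.+1) : 'I_n.+1 :=
  iter n (fun y => if P y is Some p then p else y) x.

Definition is_prio_forest n (P : forest n) : bool :=
  [forall i, forall p, (P i == Some p) ==> (p < i)] &&
  [forall x, forall y, (froot P x < froot P y) ==> (x < y)].

(* inclusion of edge sets E(P) \subset E(Q) *)
Definition le_forest n (P Q : forest n) : bool :=
  [forall i, (P i != None) ==> (Q i == P i)].

Definition bot_forest n : forest n := [ffun _ => None].

(* cover relation P' <. P between priority forests in Pi(n) (the extra top
   element \hat 1 lies above every priority forest, so it never lies strictly
   between two priority forests) *)
Definition covers n (P' P : forest n) : bool :=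
  [&& is_prio_forest P', is_prio_forest P, le_forest P' P, P' != P &
   ~~ [exists R : forest n, [&& is_prio_forest R, le_forest P' R,
                               le_forest R P, R != P' & R != P]]].

(* edge label lambda(P',P): the larger endpoint i of the (unique) edge
   (p,i) in E(P) \ E(P'); the larger endpoint of an edge of an increasing
   forest is the child *)
Definition edge_label n (P' P : forest n) : 'I_n.+1 :=
  odflt ord0 [pick i | (P i != None) && (P' i != P i)].

Definition is_chain n m (C : seq (forest n)) : bool :=
  [&& size C == m.+1, nth (bot_forest n) C 0 == bot_forest n &
   [forall k : 'I_m, covers (nth (bot_forest n) C k) (nth (bot_forest n) C k.+1)]].

Arguments is_chain : clear implicits.

Definition chain_top n m (C : seq (forest n)) : forest n :=
  nth (bot_forest n) C m.

Definition JH n m (C : seq (forest n)) : seq 'I_n.+1 :=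
  [seq edge_label (nth (bot_forest n) C k) (nth (bot_forest n) C k.+1) | k <- iota 0 m].

(* Nodes: roots  inl r  (r : 'I_(n-m).+1), where inl 0 is the root \circ *)
(* and inl r is \circ_r;  non-root vertices  inr k  (k : 'I_m), where     *)
(* inr k carries the label k+1 in [m].                                   *)
(* An ordered forest is given by the parent of each non-root vertex.    *)

Definition onode n m := ('I_(n - m).+1 + 'I_m)%type.
Definition oforest n m := {ffun 'I_m -> onode n m}.

Definition ostep n m (F : oforest n m) (x : onode n m) : onode n m :=
  match x with inl r => inl r | inr k => F k end.

(* acyclicity: following parents from every non-root vertex reaches a root
   (m steps suffice if it does); then F is a rooted forest with the n-m+1
   component trees T_0, ..., T_{n-m} rooted at \circ, \circ_1, ..., and m
   edges *)
Definition is_oforest n m (F : oforest n m) : bool :=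
  [forall k, if iter m (ostep F) (inr k) is inl _ then true else false].

(* State: index j of the current tree (roots
   \circ,...,\circ_j have been read), list vis of visited non-root vertices.
   Unblocked vertices are the unvisited children of read roots / visited
   vertices.  The
   result is the list of visited nodes in order (initial root excluded). *)
Fixpoint psearch n m (F : oforest n m) (fuel j : nat) (vis : seq 'I_m)
  : seq (onode n m) :=
  match fuel with
  | 0 => [::]
  | fuel'.+1 =>
    let ready k := (k \notin vis) &&
                   (match F k with inl r => r <= j | inr p => p \in vis end) in
    match [pick k | ready k && [forall k', ready k' ==> (k <= k')]] with
    | Some k => inr k :: psearch F fuel' j (k :: vis)
    | None => inl (inord j.+1) :: psearch F fuel' j.+1 vis
    end
  end.

Definition porder n m (F : oforest n m) : seq (onode n m) := psearch F n 0 [::].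

(* priority traversal: a partial permutation, i.e. a word over [m] u {-};
   Some k stands for the label k+1 and None for "-" *)
Definition prio_traversal n m (F : oforest n m) : seq (option 'I_m) :=
  [seq (match x with inr k => Some k | inl _ => None end) | x <- porder F].

(* priority forest: relabel nodes in visiting order, \circ labeled 0 *)
Definition prio_forest n m (F : oforest n m) : forest n :=
  let ord := porder F in
  let lab (x : onode n m) : nat :=
    if x == inl ord0 then 0 else (index x ord).+1 in
  let node_at (i : 'I_n.+1) : onode n m :=
    if val i == 0 then inl ord0 else nth (inl ord0) ord (val i).-1 in
  [ffun i => match node_at i with
             | inr k => Some (inord (lab (F k)))
             | inl _ => None
             end].

(* inverse lambda^{-1} of a partial permutation lambda = (l_1..l_m) of [n]:
   the word of length n whose j-th letter is k if l_k = j, and "-" otherwise *)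
Definition pinv n m (lam : seq 'I_n.+1) : seq (option 'I_m) :=
  [seq (if j \in lam then insub (index j lam) else None)
  | j <- [seq inord i : 'I_n.+1 | i <- iota 1 n]].

(* lambda^{-1}(P): relabel the non-root vertex lambda_k of the top element P
   by the label k (and the roots by \circ, \circ_1, ... in increasing order) *)
Definition phi n m (C : seq (forest n)) : oforest n m :=
  let P := chain_top m C in
  let lam := JH m C in
  let img (k : 'I_m) (p : 'I_n.+1) : onode n m :=
    if p \in lam then inr (insubd k (index p lam))
    else inl (inord #|[pred i : 'I_n.+1 | (i < p) && (P i == None)]|) in
  [ffun k : 'I_m => match P (nth ord0 lam k) with
             | Some p => img k p
             | None => inl ord0
             end].

Arguments phi : clear implicits.

Definition bij_chains_oforests n m (psi : seq (forest n) -> oforest n m) : Prop :=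
  [/\ forall C, is_chain n m C -> is_oforest (psi C),
      {in is_chain n m &, injective psi} &
      forall F, is_oforest F -> exists2 C, is_chain n m C & psi C = F].

Definition phi_spec n m (psi : seq (forest n) -> oforest n m) : Prop :=
  forall C, is_chain n m C ->
    prio_forest (psi C) = chain_top m C /\
    prio_traversal (psi C) = pinv m (JH m C).

(* A cover of the priority lattice adds a single, forced edge, so a complete
   m-chain is determined by its top P and its Jordan-Hoelder word
   lam = (lam_1, ..., lam_m); the pairs (P, lam) arising this way are those
   where lam enumerates the non-roots of P so that every vertex strictly between
   lam_k and its parent is an earlier lam_j.  For such a pair, priority search
   on lam^-1(P) visits the nodes of P in the order 1, ..., n: when it reaches
   vertex v, either v is a root and the current tree is exhausted, or v is the
   unblocked vertex of smallest label.  Hence the priority forest of lam^-1(P)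
   is P and its traversal is lam^-1.  Conversely, the priority forest of an
   ordered forest F, with the word of the positions at which 1, ..., m are
   visited, is such a pair, and relabeling it gives back F.  Since lam^-1
   determines lam, the two prescribed invariants determine the chain, which
   gives both injectivity and uniqueness. *)

From mathcomp Require Import all_boot zify.
Set Implicit Arguments. Unset Strict Implicit. Unset Printing Implicit Defensive.

(** * Priority forests and covers *)

Section PriorityForests.
Variable n : nat.
Implicit Types (P Q R : forest n) (i p r x : 'I_n.+1).

Definition parent_step P x := if P x is Some p then p else x.

Lemma iter_parent_step_root P t x : P x = None -> iter t (parent_step P) x = x.
Proof. by move=> Px; elim: t => //= t ->; rewrite /parent_step Px. Qed.

Lemma froot_root P x : P x = None -> froot P x = x.
Proof. exact: iter_parent_step_root. Qed.

Section Increasing.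
Variable P : forest n.
Hypothesis parent_lt : forall i p, P i = Some p -> p < i.

Lemma iter_parent_step_le t x : iter t (parent_step P) x <= x.
Proof.
elim: t => //= t IH; rewrite /parent_step; case E: (P _) => [p|] //.
exact: leq_trans (ltnW (parent_lt E)) IH.
Qed.

Lemma iter_parent_step_is_root t x : x <= t -> P (iter t (parent_step P) x) = None.
Proof.
elim: t x => [|t IH] x le_xt.
  by case E: (P x) => [p|] //; have := parent_lt E; case: x le_xt E => [[|]].
rewrite iterSr /parent_step; case E: (P x) => [p|]; last by rewrite iter_parent_step_root.
by apply: IH; rewrite -ltnS (leq_trans (parent_lt E)).
Qed.

Lemma froot_is_root x : P (froot P x) = None.
Proof. by apply: iter_parent_step_is_root; rewrite -ltnS. Qed.

Lemma froot_parent x p : P x = Some p -> froot P x = froot P p.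
Proof.
move=> E; change (iter n (parent_step P) x = iter n (parent_step P) p).
have lt_px := parent_lt E.
have n_gt0 : 0 < n by have := ltn_ord x; lia.
have -> : iter n (parent_step P) x = iter n.-1 (parent_step P) (parent_step P x).
  by rewrite -iterSr prednK.
have -> : iter n (parent_step P) p = parent_step P (iter n.-1 (parent_step P) p).
  by rewrite -iterS prednK.
rewrite {2 3}/parent_step E iter_parent_step_is_root //.
by have := ltn_ord x; lia.
Qed.

Lemma froot_le x : froot P x <= x.
Proof. exact: iter_parent_step_le. Qed.

End Increasing.

Definition gap_free P := forall i p, P i = Some p ->
  p < i /\ forall r, p < r -> r < i -> P r <> None.

Lemma gap_free_parent_lt P : gap_free P -> forall i p, P i = Some p -> p < i.
Proof. by move=> gfP i p /gfP []. Qed.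

Lemma gap_free_root0 P : gap_free P -> P ord0 = None.
Proof. by move=> gfP; case E: (P ord0) => [p|] //; have [] := gfP _ _ E. Qed.

Lemma prio_forest_gap_free P : is_prio_forest P -> gap_free P.
Proof.
case/andP=> /forallP inc /forallP sep.
have parent_lt i p : P i = Some p -> p < i.
  by move=> E; have /forallP/(_ p) := inc i; rewrite E eqxx.
move=> i p E; split=> [|r lt_pr lt_ri Pr]; first exact: parent_lt E.
have : froot P i < froot P r.
  rewrite (froot_root Pr) (froot_parent parent_lt E).
  exact: leq_ltn_trans (froot_le parent_lt p) lt_pr.
by move/(implyP (forallP (sep i) r)); rewrite ltnNge ltnW.
Qed.

Lemma gap_free_no_root_above_froot P : gap_free P ->
  forall x r, froot P x < r -> r <= x -> P r <> None.
Proof.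
move=> gfP x; have parent_lt := gap_free_parent_lt gfP.
have [k] := ubnP x; elim: k x => [|k IH] x // lt_xk r lt_root le_rx.
case E: (P x) => [p|]; last first.
  by rewrite froot_root // in lt_root; move: (leq_trans lt_root le_rx); rewrite ltnn.
rewrite (froot_parent parent_lt E) in lt_root.
have [le_rp|lt_pr] := leqP r p.
  by apply: (IH p) => //; rewrite -ltnS (leq_trans _ lt_xk) // ltnS (parent_lt _ _ E).
case: (ltngtP r x) le_rx => [lt_rx _|//|/val_inj ->]; last by rewrite E.
by have [_] := gfP _ _ E; apply.
Qed.

Lemma gap_free_prio_forest P : gap_free P -> is_prio_forest P.
Proof.
move=> gfP; have parent_lt := gap_free_parent_lt gfP.
apply/andP; split.
  by apply/forallP=> i; apply/forallP=> p; apply/implyP=> /eqP /parent_lt.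
apply/forallP=> x; apply/forallP=> y; apply/implyP=> lt_root.
rewrite ltnNge; apply/negP=> le_yx.
apply: (gap_free_no_root_above_froot gfP lt_root _ (froot_is_root parent_lt y)).
exact: leq_trans (froot_le parent_lt y) le_yx.
Qed.

Lemma prio_forestP P : is_prio_forest P <-> gap_free P.
Proof. by split; [apply: prio_forest_gap_free | apply: gap_free_prio_forest]. Qed.

Lemma le_forestP P Q : reflect (forall i, P i <> None -> Q i = P i) (le_forest P Q).
Proof.
apply: (iffP forallP) => H i.
  by move=> Pi; have := H i; rewrite (introN eqP Pi) => /eqP.
by apply/implyP=> /eqP Pi; apply/eqP; apply: H.
Qed.

Lemma le_forest_refl P : le_forest P P.
Proof. exact/le_forestP. Qed.

Lemma le_forest_trans P Q R : le_forest P Q -> le_forest Q R -> le_forest P R.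
Proof. by move=> /le_forestP PQ /le_forestP QR; apply/le_forestP=> i Pi; rewrite QR PQ. Qed.

Definition add_edge P' P i : forest n := [ffun j => if j == i then P i else P' j].

Lemma gap_free_add_edge P' P i : gap_free P' -> gap_free P -> P i <> None ->
  (forall j, P' j = None -> P j <> None -> i <= j) -> gap_free (add_edge P' P i).
Proof.
move=> gfP' gfP Pi i_min j p; rewrite ffunE; case: eqP => [-> E|_ E]; last first.
  have [lt_pj gap] := gfP' _ _ E; split=> // r lt_pr lt_rj; rewrite ffunE.
  by case: eqP => // _; apply: gap.
have [lt_pi gap] := gfP _ _ E; split=> // r lt_pr lt_ri; rewrite ffunE.
case: eqP => [Er|_]; first by rewrite Er ltnn in lt_ri.
move=> P'r; have := i_min r P'r (gap r lt_pr lt_ri).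
by rewrite leqNgt lt_ri.
Qed.

(* The new edge of a cover is the one at the smallest new non-root: adding
   it alone already gives a priority forest between the two. *)
Lemma covers_add_edge P' P : covers P' P ->
  exists i, [/\ P' i = None, P i <> None & forall j, j != i -> P' j = P j].
Proof.
case/and5P=> /prio_forestP gfP' /prio_forestP gfP /le_forestP le_P'P neq_P'P no_between.
pose new j := (P' j == None) && (P j != None).
have [j0 new_j0] : exists j, new j.
  apply/existsP; apply: contraR neq_P'P => /existsPn none_new; apply/eqP/ffunP=> j.
  have := none_new j; rewrite /new; case E: (P' j) => [p|] /=.
    by rewrite -E le_P'P // E.
  by rewrite negbK => /eqP ->.
case: (arg_minnP (fun j : 'I_n.+1 => val j) new_j0) => i /andP[/eqP P'i /eqP Pi] i_min.
exists i; split=> //.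
have gfR : gap_free (add_edge P' P i).
  apply: gap_free_add_edge => // j P'j Pj; apply: i_min.
  by rewrite /new P'j eqxx; apply/eqP.
suff /eqP <- : add_edge P' P i == P by move=> j /negbTE ne_ji; rewrite ffunE ne_ji.
apply: contraNT no_between => ne_RP; apply/existsP; exists (add_edge P' P i).
rewrite gap_free_prio_forest // ne_RP andbT /=; apply/and3P; split.
- apply/le_forestP=> j P'j; rewrite ffunE; case: eqP => // eq_ji.
  by rewrite eq_ji P'i in P'j.
- by apply/le_forestP=> j; rewrite ffunE; case: eqP => [-> //|_]; apply: le_P'P.
- by apply/eqP=> /ffunP/(_ i); rewrite ffunE eqxx P'i; apply: Pi.
Qed.

Lemma edge_labelE P' P i : P' i = None -> P i <> None ->
  (forall j, j != i -> P' j = P j) -> edge_label P' P = i.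
Proof.
move=> P'i Pi same; rewrite /edge_label; case: pickP => [j /andP[_ ne_j]|none].
  by apply/eqP; apply: contraNT ne_j => /same ->.
by have := none i; rewrite P'i; case: (P i) Pi.
Qed.

Definition restrict P (S : seq 'I_n.+1) : forest n :=
  [ffun i => if i \in S then P i else None].

Definition roots_below P (v : nat) := #|[pred i : 'I_n.+1 | (i < v) && (P i == None)]|.

Lemma roots_below0 P : roots_below P 0 = 0.
Proof. exact: eq_card0. Qed.

Lemma roots_belowS P v : v < n.+1 ->
  roots_below P v.+1 = roots_below P v + (P (inord v) == None).
Proof.
move=> lt_vn; rewrite /roots_below (cardD1 (inord v)) inE inordK // ltnSn addnC.
congr (_ + _); apply: eq_card => i; rewrite !inE ltnS leq_eqVlt.
case: (i =P inord v) => [->|ne_iv] /=; first by rewrite inordK // ltnn.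
suff /negbTE -> : val i != v by [].
by apply: contra_not_neq ne_iv => <-; rewrite inord_val.
Qed.

Lemma leq_roots_below P u v : u <= v -> roots_below P u <= roots_below P v.
Proof.
move=> le_uv; apply: subset_leq_card; apply/subsetP=> i; rewrite !inE.
by case/andP=> lt_iu ->; rewrite (leq_trans lt_iu le_uv).
Qed.

Lemma roots_below_lt P p v : P p = None -> p < v -> roots_below P p < roots_below P v.
Proof.
move=> Pp lt_pv; apply: leq_trans (leq_roots_below P lt_pv).
by rewrite roots_belowS // inord_val Pp eqxx addn1.
Qed.

End PriorityForests.

(** * Complete chains *)

(* The pairs (top element, Jordan-Hoelder word) of the complete m-chains. *)
Record admissible n m (P : forest n) (lam : seq 'I_n.+1) : Prop := Admissible {
  admissible_gap_free : gap_free P;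
  admissible_size : size lam = m;
  admissible_uniq : uniq lam;
  admissible_nonroot : forall i, (P i != None) = (i \in lam);
  admissible_between : forall k, k < m -> forall p, P (nth ord0 lam k) = Some p ->
    forall r : 'I_n.+1, p < r -> r < nth ord0 lam k -> r \in take k lam }.

Definition prefix_chain n m (P : forest n) (lam : seq 'I_n.+1) :=
  [seq restrict P (take t lam) | t <- iota 0 m.+1].

Lemma nth_prefix_chain n m (P : forest n) lam t : t <= m ->
  nth (bot_forest n) (prefix_chain m P lam) t = restrict P (take t lam).
Proof. by move=> le_tm; rewrite (nth_map 0) ?size_iota ?ltnS // nth_iota. Qed.

Section PrefixChain.
Variables (n m : nat) (P : forest n) (lam : seq 'I_n.+1).
Hypothesis adm : admissible m P lam.
Let size_lam := admissible_size adm.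

Lemma gap_free_restrict_prefix t : gap_free (restrict P (take t lam)).
Proof.
move=> i p; rewrite ffunE; case: ifP => // i_in E.
have [lt_pi gap] := admissible_gap_free adm E; split=> // r lt_pr lt_ri.
have i_lam : i \in lam := mem_take i_in.
have lt_k : index i lam < m by rewrite -size_lam index_mem.
have := admissible_between adm lt_k; rewrite nth_index // => /(_ p E r lt_pr lt_ri) r_in.
have r_lam : r \in lam := mem_take r_in.
rewrite ffunE (in_take _ r_lam) (leq_trans (index_ltn r_in)) ?(ltnW (index_ltn i_in)) //.
by apply/eqP; rewrite (admissible_nonroot adm).
Qed.

Section Step.
Variable k : nat.
Hypothesis lt_km : k < m.
Let A := restrict P (take k lam).
Let B := restrict P (take k.+1 lam).
Let l := nth ord0 lam k.

Lemma take_nthS : take k.+1 lam = rcons (take k lam) l.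
Proof. by rewrite (take_nth ord0) ?size_lam. Qed.

Lemma restrict_prefix_new : A l = None /\ B l <> None.
Proof.
have l_lam : l \in lam by rewrite mem_nth ?size_lam.
have l_notin : l \notin take k lam.
  by rewrite (in_take _ l_lam) /l index_uniq ?size_lam ?ltnn ?(admissible_uniq adm).
rewrite /A /B !ffunE (negbTE l_notin) take_nthS mem_rcons mem_head; split=> //.
by apply/eqP; rewrite (admissible_nonroot adm).
Qed.

Lemma restrict_prefix_old j : j != l -> A j = B j.
Proof. by move=> ne_jl; rewrite /A /B !ffunE take_nthS mem_rcons in_cons (negbTE ne_jl). Qed.

Lemma covers_restrict_prefix : covers A B.
Proof.
have [Al Bl] := restrict_prefix_new.
apply/and5P; split; try exact/gap_free_prio_forest/gap_free_restrict_prefix.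
- apply/le_forestP=> i Ai; case: (i =P l) => [eq_il|/eqP ne_il].
    by rewrite eq_il Al in Ai.
  by rewrite restrict_prefix_old.
- by apply/eqP=> /ffunP/(_ l); rewrite -/A -/B Al; apply: nesym.
apply/existsPn=> R; apply/negP; case/and5P=> _ /le_forestP le_AR /le_forestP le_RB ne_RA ne_RB.
have R_old j : j != l -> R j = A j.
  move=> ne_jl; case E: (A j) => [a|]; first by rewrite le_AR // E.
  by case E': (R j) => [r|] //; have := le_RB j; rewrite E' -restrict_prefix_old // E => ->.
case E: (R l) => [r|].
  move/negP: ne_RB; apply; apply/eqP/ffunP=> j; case: (j =P l) => [->|/eqP ne_jl].
    by rewrite le_RB // E.
  by rewrite R_old // restrict_prefix_old.
move/negP: ne_RA; apply; apply/eqP/ffunP=> j; case: (j =P l) => [->|/eqP ne_jl].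
  by rewrite E Al.
by rewrite R_old.
Qed.

Lemma edge_label_restrict_prefix : edge_label A B = l.
Proof.
have [Al Bl] := restrict_prefix_new.
exact: edge_labelE Al Bl restrict_prefix_old.
Qed.

End Step.

Lemma prefix_chain_is_chain : is_chain n m (prefix_chain m P lam).
Proof.
apply/and3P; split; first by rewrite size_map size_iota.
  by rewrite nth_prefix_chain // take0; apply/eqP/ffunP=> i; rewrite !ffunE.
apply/forallP=> k; rewrite !nth_prefix_chain ?(ltnW (ltn_ord k)) ?ltn_ord //.
exact: covers_restrict_prefix.
Qed.

Lemma restrict_all : restrict P lam = P.
Proof.
apply/ffunP=> i; rewrite ffunE; case: ifP => // i_notin.
by apply/esym/eqP; move/negbT: i_notin; rewrite -(admissible_nonroot adm) negbK.
Qed.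

Lemma prefix_chain_top : chain_top m (prefix_chain m P lam) = P.
Proof. by rewrite /chain_top nth_prefix_chain // take_oversize ?size_lam ?restrict_all. Qed.

Lemma prefix_chain_JH : JH m (prefix_chain m P lam) = lam.
Proof.
apply: (@eq_from_nth _ ord0); first by rewrite size_map size_iota.
move=> k; rewrite size_map size_iota => lt_km.
rewrite (nth_map 0) ?size_iota // nth_iota // add0n.
by rewrite !nth_prefix_chain ?(ltnW lt_km) // edge_label_restrict_prefix.
Qed.

End PrefixChain.

Section ChainData.
Variables (n m : nat) (C : seq (forest n)).
Hypothesis chainC : is_chain n m C.
Let Pk k := nth (bot_forest n) C k.
Let top := chain_top m C.
Let lam := JH m C.

Lemma size_chain : size C = m.+1.
Proof. by case/and3P: chainC => /eqP. Qed.

Lemma chain_bot : Pk 0 = bot_forest n.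
Proof. by case/and3P: chainC => _ /eqP. Qed.

Lemma chain_covers k : k < m -> covers (Pk k) (Pk k.+1).
Proof. by move=> lt_km; case/and3P: chainC => _ _ /forallP/(_ (Ordinal lt_km)). Qed.

Lemma size_JH : size lam = m.
Proof. by rewrite size_map size_iota. Qed.

Lemma nth_JH k : k < m -> nth ord0 lam k = edge_label (Pk k) (Pk k.+1).
Proof. by move=> lt_km; rewrite (nth_map 0) ?size_iota // nth_iota. Qed.

Lemma chain_le_top k : k <= m -> le_forest (Pk k) top.
Proof.
move=> le_km; have : k + (m - k) = m by rewrite subnKC.
move: (m - k) => d; elim: d k {le_km} => [|d IH] k def_m.
  by rewrite addn0 in def_m; rewrite def_m; apply: le_forest_refl.
have lt_km : k < m by rewrite -def_m addnS ltnS leq_addr.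
apply: le_forest_trans (IH k.+1 _); last by rewrite addSnnS.
by case/and5P: (chain_covers lt_km).
Qed.

Lemma chain_gap_free k : k <= m -> gap_free (Pk k).
Proof.
case: k => [|k] le_km; first by rewrite chain_bot => i p; rewrite ffunE.
by case/and5P: (chain_covers le_km) => _ /prio_forestP.
Qed.

Lemma chain_restrict k : k <= m -> Pk k = restrict top (take k lam).
Proof.
elim: k => [|k IH] lt_km.
  by rewrite chain_bot take0; apply/ffunP=> i; rewrite !ffunE.
have [i [Pk_i Pk1_i same]] := covers_add_edge (chain_covers lt_km).
have lam_k : nth ord0 lam k = i by rewrite nth_JH // (edge_labelE Pk_i Pk1_i same).
rewrite (take_nth ord0) ?size_JH // lam_k.
apply/ffunP=> j; rewrite ffunE mem_rcons in_cons.
case: (j =P i) => [->|/eqP ne_ji] /=.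
  by have /le_forestP := chain_le_top lt_km; move=> /(_ i Pk1_i) ->.
by rewrite -same // IH ?(ltnW lt_km) // ffunE.
Qed.

Lemma JH_new k : k < m -> top (nth ord0 lam k) <> None /\ nth ord0 lam k \notin take k lam.
Proof.
move=> lt_km; have [i [Pk_i Pk1_i same]] := covers_add_edge (chain_covers lt_km).
have lam_k : nth ord0 lam k = i by rewrite nth_JH // (edge_labelE Pk_i Pk1_i same).
have top_i : top i = Pk k.+1 i by have /le_forestP := chain_le_top lt_km; move=> /(_ i Pk1_i) ->.
rewrite lam_k top_i; split=> //.
apply/negP=> i_in; move: Pk_i; rewrite chain_restrict ?(ltnW lt_km) // ffunE i_in top_i.
exact: Pk1_i.
Qed.

Lemma chain_admissible : admissible m top lam.
Proof.
have top_restrict : top = restrict top lam.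
  by rewrite {1}/top /chain_top -/(Pk m) chain_restrict // take_oversize ?size_JH.
split.
- exact: chain_gap_free.
- exact: size_JH.
- have uniq_take k : k <= m -> uniq (take k lam).
    elim: k => [|k IH] lt_km; first by rewrite take0.
    rewrite (take_nth ord0) ?size_JH // rcons_uniq IH ?(ltnW lt_km) // andbT.
    by have [] := JH_new lt_km.
  by have := uniq_take m (leqnn m); rewrite take_oversize ?size_JH.
- move=> i; apply/idP/idP=> [|i_lam].
    by rewrite top_restrict ffunE; case: ifP.
  have lt_im : index i lam < m by rewrite -size_JH index_mem.
  by have [] := JH_new lt_im; rewrite nth_index // => /eqP.
move=> k lt_km p E r lt_pr lt_rk.
have := chain_gap_free lt_km; rewrite chain_restrict //.
have E' : restrict top (take k.+1 lam) (nth ord0 lam k) = Some p.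
  by rewrite ffunE (take_nth ord0) ?size_JH // mem_rcons mem_head.
move=> /(_ _ _ E') [_ /(_ r lt_pr lt_rk)].
rewrite ffunE (take_nth ord0) ?size_JH // mem_rcons in_cons.
case: (r =P nth ord0 lam k) => [eq_r|_] /=; first by rewrite eq_r ltnn in lt_rk.
by case: ifP.
Qed.

Lemma chain_prefix_chain : C = prefix_chain m top lam.
Proof.
apply: (@eq_from_nth _ (bot_forest n)); first by rewrite size_chain size_map size_iota.
move=> t; rewrite size_chain ltnS => le_tm.
by rewrite nth_prefix_chain // -chain_restrict.
Qed.

End ChainData.

(** * Priority search on the relabeled forest *)

Definition reached n m (j : nat) (vis : seq 'I_m) (x : onode n m) : bool :=
  match x with inl r => r <= j | inr k => k \in vis end.

Definition ready n m (F : oforest n m) (j : nat) (vis : seq 'I_m) (k : 'I_m) :=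
  (k \notin vis) && reached j vis (F k).

Section SearchStep.
Variables (n m : nat) (F : oforest n m) (d j : nat) (vis : seq 'I_m).

Lemma psearchS : psearch F d.+1 j vis =
  match [pick k | ready F j vis k && [forall k', ready F j vis k' ==> (k <= k')]] with
  | Some k => inr k :: psearch F d j (k :: vis)
  | None => inl (inord j.+1) :: psearch F d j.+1 vis
  end.
Proof. by []. Qed.

Lemma psearch_visit k0 : ready F j vis k0 -> (forall k, ready F j vis k -> k0 <= k) ->
  psearch F d.+1 j vis = inr k0 :: psearch F d j (k0 :: vis).
Proof.
move=> ready_k0 k0_min; rewrite psearchS; case: pickP => [k /andP[ready_k /forallP k_min]|].
  suff -> : k = k0 by [].
  by apply/val_inj/eqP; rewrite eqn_leq k0_min // andbT (implyP (k_min k0)).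
move=> /(_ k0); rewrite ready_k0 /= => /negP[]; apply/forallP=> k.
exact/implyP/k0_min.
Qed.

Lemma psearch_read : (forall k, ~~ ready F j vis k) ->
  psearch F d.+1 j vis = inl (inord j.+1) :: psearch F d j.+1 vis.
Proof.
move=> none; rewrite psearchS; case: pickP => // k /andP[ready_k].
by have := none k; rewrite ready_k.
Qed.

End SearchStep.

Lemma iter_ostep_inl n m (F : oforest n m) t r : iter t (ostep F) (inl r) = inl r.
Proof. by elim: t => //= t ->. Qed.

Section Relabel.
Variables (n m : nat) (P : forest n) (lam : seq 'I_n.+1).

Definition onode_of (i : 'I_n.+1) : onode n m :=
  if insub (index i lam) is Some k then inr k else inl (inord (roots_below P i)).

Definition relabel : oforest n m :=
  [ffun k : 'I_m => if P (nth ord0 lam k) is Some p then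
               if p \in lam then inr (insubd k (index p lam))
               else inl (inord (roots_below P p))
             else inl ord0].

Hypothesis adm : admissible m P lam.
Let gfP := admissible_gap_free adm.
Let size_lam := admissible_size adm.
Let uniq_lam := admissible_uniq adm.

Lemma notin_lam_root i : i \notin lam -> P i = None.
Proof. by rewrite -(admissible_nonroot adm) negbK => /eqP. Qed.

Lemma ord0_notin_lam : ord0 \notin lam.
Proof. by rewrite -(admissible_nonroot adm) gap_free_root0. Qed.

Lemma mem_nth_lam (k : 'I_m) : nth ord0 lam k \in lam.
Proof. by rewrite mem_nth ?size_lam. Qed.

Lemma nth_lam_inj (k k' : 'I_m) : nth ord0 lam k = nth ord0 lam k' -> k = k'.
Proof. by move/eqP; rewrite nth_uniq ?size_lam // => /eqP/val_inj. Qed.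

Lemma parent_nth_lam (k : 'I_m) : exists p, P (nth ord0 lam k) = Some p.
Proof.
have := mem_nth_lam k; rewrite -(admissible_nonroot adm).
by case: (P _) => [p|] // _; exists p.
Qed.

Lemma roots_below_root_le p : P p = None -> roots_below P p <= n - m.
Proof.
move=> Pp; have nonroots : #|[pred i : 'I_n.+1 | i \in lam]| = m.
  by rewrite -size_lam -(card_uniqP uniq_lam); apply: eq_card.
have all_roots : roots_below P n.+1 = #|[predC [pred i : 'I_n.+1 | i \in lam]]|.
  apply: eq_card => i; rewrite !inE ltn_ord /= -(admissible_nonroot adm).
  by case: (P i).
have := cardC [pred i : 'I_n.+1 | i \in lam]; rewrite card_ord nonroots.
have := roots_below_lt Pp (ltn_ord p); rewrite all_roots.
by set c := #|[predC _]|; lia.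
Qed.

Lemma roots_below_gt0 v : 0 < v -> 0 < roots_below P v.
Proof.
move=> v_gt0; rewrite -(roots_below0 P).
exact: roots_below_lt (gap_free_root0 gfP) v_gt0.
Qed.

Lemma onode_of_nth (k : 'I_m) : onode_of (nth ord0 lam k) = inr k.
Proof. by rewrite /onode_of index_uniq ?size_lam // valK. Qed.

Lemma onode_of_root i : i \notin lam -> onode_of i = inl (inord (roots_below P i)).
Proof. by move=> i_notin; rewrite /onode_of memNindex // size_lam insubF // ltnn. Qed.

Lemma onode_of_mem p : p \in lam ->
  exists k : 'I_m, p = nth ord0 lam k /\ onode_of p = inr k.
Proof.
move=> p_in; have lt_pm : index p lam < m by rewrite -size_lam index_mem.
exists (Ordinal lt_pm); rewrite /= nth_index //; split=> //.
by rewrite -{1}(nth_index ord0 p_in) (onode_of_nth (Ordinal lt_pm)).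
Qed.

Lemma onode_of_root_bounded p : p \notin lam ->
  onode_of p = inl (inord (roots_below P p)) /\ roots_below P p < (n - m).+1.
Proof.
move=> p_notin; rewrite onode_of_root //; split=> //.
by rewrite ltnS roots_below_root_le // notin_lam_root.
Qed.

Lemma onode_of_inj : injective onode_of.
Proof.
move=> p q; case: (boolP (p \in lam)) => p_in; case: (boolP (q \in lam)) => q_in.
- by have [k [-> ->]] := onode_of_mem p_in; have [k' [-> ->]] := onode_of_mem q_in; case=> ->.
- by have [k [_ ->]] := onode_of_mem p_in; rewrite onode_of_root.
- by have [k [_ ->]] := onode_of_mem q_in; rewrite onode_of_root.
have [-> lt_p] := onode_of_root_bounded p_in; have [-> lt_q] := onode_of_root_bounded q_in.
case=> /(congr1 val); rewrite /= (inordK lt_p) (inordK lt_q) => eq_pq.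
have Pp := notin_lam_root p_in; have Pq := notin_lam_root q_in.
apply: val_inj; case: (ltngtP p q) => // lt_pq.
  by have := roots_below_lt Pp lt_pq; rewrite eq_pq ltnn.
by have := roots_below_lt Pq lt_pq; rewrite eq_pq ltnn.
Qed.

Lemma onode_of0 : onode_of ord0 = inl ord0.
Proof.
rewrite onode_of_root ?ord0_notin_lam //; congr inl.
by apply: val_inj; rewrite /= roots_below0 inordK.
Qed.

Lemma relabelE (k : 'I_m) p : P (nth ord0 lam k) = Some p -> relabel k = onode_of p.
Proof.
move=> E; rewrite ffunE E; case: ifP => p_in; last by rewrite onode_of_root // p_in.
have [k' [def_p ->]] := onode_of_mem p_in.
by rewrite def_p index_uniq ?size_lam // valKd.
Qed.

Definition visited_upto (v : nat) (vis : seq 'I_m) :=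
  forall k : 'I_m, (k \in vis) = (nth ord0 lam k < v).

Section ReadyRelabel.
Variables (v : nat) (vis : seq 'I_m).
Hypotheses (v_gt0 : 0 < v) (visE : visited_upto v vis).
Let ready_v := ready relabel (roots_below P v).-1 vis.

Lemma ready_relabel (k : 'I_m) p : P (nth ord0 lam k) = Some p ->
  ready_v k = (v <= nth ord0 lam k) && (p < v).
Proof.
move=> E; rewrite /ready_v /ready (relabelE E) visE -leqNgt; congr andb.
case: (boolP (p \in lam)) => p_in.
  by have [k' [def_p ->]] := onode_of_mem p_in; rewrite /= visE -def_p.
have [-> lt_p] := onode_of_root_bounded p_in; rewrite /= (inordK lt_p).
have Pp := notin_lam_root p_in; have := roots_below_gt0 v_gt0.
case: (ltnP p v) => [lt_pv|le_vp].
  by have := roots_below_lt Pp lt_pv; lia.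
by have := leq_roots_below P le_vp; lia.
Qed.

Lemma ready_relabel_min (k0 : 'I_m) : val (nth ord0 lam k0) = v ->
  ready_v k0 /\ forall k, ready_v k -> k0 <= k.
Proof.
move=> lam_k0; split.
  have [p E] := parent_nth_lam k0; rewrite (ready_relabel E) lam_k0 leqnn /=.
  by have [] := gfP E; rewrite lam_k0.
move=> k; have [p E] := parent_nth_lam k.
rewrite (ready_relabel E) => /andP[le_vk lt_pv].
case: (ltngtP (nth ord0 lam k0) (nth ord0 lam k)) => [lt_k0k|lt_kk0|/val_inj/nth_lam_inj-> //].
  have lt_pk0 : p < nth ord0 lam k0 by rewrite lam_k0.
  have /index_ltn := admissible_between adm (ltn_ord k) E lt_pk0 lt_k0k.
  by rewrite index_uniq ?size_lam // => /ltnW.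
by move: lt_kk0; rewrite lam_k0 ltnNge le_vk.
Qed.

Lemma ready_relabel_none : v < n.+1 -> (inord v : 'I_n.+1) \notin lam ->
  forall k, ~~ ready_v k.
Proof.
move=> lt_vn v_notin k; apply/negP.
have [p E] := parent_nth_lam k; rewrite (ready_relabel E) => /andP[le_vk lt_pv].
have lt_vk : (inord v : 'I_n.+1) < nth ord0 lam k.
  rewrite ltn_neqAle inordK // le_vk andbT; apply: contraNneq v_notin => eq_vk.
  by rewrite (_ : inord v = nth ord0 lam k) ?mem_nth_lam //; apply: val_inj; rewrite /= inordK.
have lt_pv' : p < (inord v : 'I_n.+1) by rewrite inordK.
by have /mem_take := admissible_between adm (ltn_ord k) E lt_pv' lt_vk; apply/negP.
Qed.

End ReadyRelabel.

(* Before vertex [v] is reached, the index of the current tree is the number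
   of roots below [v], minus one for the initial root. *)
Lemma psearch_relabel d v vis : v + d = n.+1 -> 0 < v -> visited_upto v vis ->
  psearch relabel d (roots_below P v).-1 vis = [seq onode_of (inord i) | i <- iota v d].
Proof.
elim: d v vis => [//|d IH] v vis def_n v_gt0 visE.
have lt_vn : v < n.+1 by lia.
set w : 'I_n.+1 := inord v; have val_w : w = v :> nat by rewrite /w inordK.
rewrite [in RHS]/= -/w; case: (boolP (w \in lam)) => w_in.
  have [k0 [def_w onode_w]] := onode_of_mem w_in.
  have lam_k0 : nth ord0 lam k0 = v :> nat by rewrite -def_w.
  have [ready_k0 k0_min] := ready_relabel_min v_gt0 visE lam_k0.
  rewrite (psearch_visit _ ready_k0 k0_min) onode_w; congr (_ :: _).
  have Pw : P w != None by rewrite (admissible_nonroot adm).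
  have -> : roots_below P v = roots_below P v.+1 by rewrite roots_belowS // -/w (negbTE Pw) addn0.
  apply: IH; [lia | lia | move=> k].
  rewrite in_cons visE [in RHS]ltnS [in RHS]leq_eqVlt; congr orb.
  apply/eqP/eqP=> [->|eq_kv]; first by rewrite -def_w.
  by apply: nth_lam_inj; rewrite -def_w; apply: val_inj; rewrite /= eq_kv val_w.
rewrite psearch_read; last exact: ready_relabel_none.
have roots_vS : roots_below P v.+1 = (roots_below P v).+1.
  by rewrite roots_belowS // -/w notin_lam_root // addn1.
rewrite onode_of_root // val_w prednK ?roots_below_gt0 //; congr (_ :: _).
rewrite -[roots_below P v]/((roots_below P v).+1.-1) -roots_vS.
apply: IH; [lia | lia | move=> k].
rewrite visE [in RHS]ltnS [in RHS]leq_eqVlt; case: eqP => [eq_kv|//]; case/negP: w_in.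
by rewrite (_ : w = nth ord0 lam k) ?mem_nth_lam //; apply: val_inj; rewrite /= val_w.
Qed.

Lemma porder_relabel : porder relabel = [seq onode_of (inord i) | i <- iota 1 n].
Proof.
have roots1 : roots_below P 1 = 1.
  rewrite roots_belowS // roots_below0 (_ : inord 0 = ord0) ?gap_free_root0 //.
  exact/val_inj/inordK.
rewrite /porder [X in psearch _ _ X](_ : 0 = (roots_below P 1).-1); last by rewrite roots1.
apply: psearch_relabel => // k.
rewrite in_nil ltnS leqn0; apply/esym/negbTE; apply: contraNneq ord0_notin_lam => eq_k0.
by rewrite (_ : ord0 = nth ord0 lam k) ?mem_nth_lam //; apply: val_inj.
Qed.

Lemma uniq_porder_relabel : uniq (porder relabel).
Proof.
rewrite porder_relabel (map_comp onode_of inord) map_inj_uniq; last exact: onode_of_inj.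
rewrite map_inj_in_uniq ?iota_uniq // => x y; rewrite !mem_iota add1n.
by move=> /andP[_ lt_x] /andP[_ lt_y] /(congr1 val); rewrite /= !inordK.
Qed.

Lemma nth_porder_relabel (i : 'I_n.+1) : 0 < i ->
  nth (inl ord0) (porder relabel) i.-1 = onode_of i.
Proof.
move=> i_gt0; have lt_in := ltn_ord i.
rewrite porder_relabel (nth_map 0) ?size_iota ?nth_iota; try lia.
by rewrite add1n prednK // inord_val.
Qed.

Lemma visit_label_onode_of (p : 'I_n.+1) :
  (if onode_of p == inl ord0 then 0 else (index (onode_of p) (porder relabel)).+1) = p.
Proof.
case: (posnP p) => [p0|p_gt0].
  by rewrite (_ : p = ord0) ?onode_of0 //; exact: val_inj.
have -> : (onode_of p == inl ord0) = false.
  case: (boolP (p \in lam)) => p_in; first by have [k [_ ->]] := onode_of_mem p_in.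
  have [-> lt_p] := onode_of_root_bounded p_in; apply/negbTE/eqP; case=> /(congr1 val).
  by rewrite /= inordK // => eq0; move: (roots_below_gt0 p_gt0); rewrite eq0.
rewrite -(nth_porder_relabel p_gt0) index_uniq ?uniq_porder_relabel ?prednK //.
by rewrite porder_relabel size_map size_iota; have := ltn_ord p; lia.
Qed.

Lemma prio_forest_relabel : prio_forest relabel = P.
Proof.
apply/ffunP=> i; rewrite /prio_forest ffunE.
case: (posnP i) => [i0|i_gt0].
  by rewrite (_ : i = ord0) ?gap_free_root0 //; exact: val_inj.
rewrite -[\val i]/(nat_of_ord i) nth_porder_relabel //.
case: (boolP (i \in lam)) => i_in.
  have [k [def_i ->]] := onode_of_mem i_in; have [p E] := parent_nth_lam k.
  by rewrite (relabelE E) visit_label_onode_of inord_val def_i E.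
by rewrite onode_of_root // notin_lam_root.
Qed.

Lemma prio_traversal_relabel : prio_traversal relabel = pinv m lam.
Proof.
rewrite /prio_traversal porder_relabel /pinv -!map_comp; apply: eq_map => i /=.
rewrite /onode_of; case: (boolP (inord i \in lam)) => i_in; last first.
  by rewrite memNindex // size_lam insubF ?ltnn.
by case: insub.
Qed.

Definition lam_rank (k : 'I_m) := #|[pred k' : 'I_m | nth ord0 lam k' < nth ord0 lam k]|.

Lemma lam_rank_lt (k : 'I_m) : lam_rank k < m.
Proof.
rewrite -[m]card_ord; apply: proper_card; rewrite properE; apply/andP; split.
  exact/subsetP.
by apply/subsetPn; exists k; rewrite ?inE ?ltnn.
Qed.

Lemma is_oforest_relabel : is_oforest relabel.
Proof.
suff reach t (k : 'I_m) : lam_rank k < t -> exists r, iter t (ostep relabel) (inr k) = inl r.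
  by apply/forallP=> k; have [r ->] := reach m k (lam_rank_lt k).
elim: t k => [//|t IH] k; rewrite ltnS => lt_kt.
have [p E] := parent_nth_lam k; rewrite iterSr /= (relabelE E).
case: (boolP (p \in lam)) => p_in; last by rewrite onode_of_root // iter_ostep_inl; eexists.
have [k' [def_p ->]] := onode_of_mem p_in; apply: IH; apply: leq_trans lt_kt.
have lt_k'k : nth ord0 lam k' < nth ord0 lam k by rewrite -def_p; have [] := gfP E.
apply: proper_card; rewrite properE; apply/andP; split.
  by apply/subsetP=> x; rewrite !inE => /ltn_trans; apply.
by apply/subsetPn; exists k'; rewrite !inE ?ltnn.
Qed.

End Relabel.

(** * Priority search on an arbitrary ordered forest *)

Definition is_inl n m (x : onode n m) : bool := if x is inl _ then true else false.

Section PrioritySearch.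
Variables (n m : nat) (F : oforest n m).
Hypotheses (le_mn : m <= n) (oforestF : is_oforest F).

(* Each step either visits a vertex or reads a root. *)
Definition search_inv d j (vis : seq 'I_m) :=
  [/\ uniq vis, j <= n - m & j + size vis + d = n].

Lemma size_uniq_ord (vis : seq 'I_m) : uniq vis -> size vis <= m.
Proof.
move=> uniq_vis; rewrite -(card_uniqP uniq_vis).
by apply: leq_trans (max_card _) _; rewrite card_ord.
Qed.

Lemma visited_of_reached j vis : (forall k, ~~ ready F j vis k) ->
  forall t k, reached j vis (iter t (ostep F) (inr k)) -> k \in vis.
Proof.
move=> none; elim=> [//|t IH] k; rewrite iterSr /= => reach_t.
apply: contraNT (none k) => k_notin; rewrite /ready k_notin.
by case E: (F k) reach_t => [r|k'] /=; rewrite ?iter_ostep_inl //; apply: IH.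
Qed.

(* Once all roots are read, every vertex descends from a read root; if none is
   unblocked, all of them are visited and no step can remain. *)
Lemma search_read_lt d j vis : search_inv d.+1 j vis -> (forall k, ~~ ready F j vis k) ->
  j < n - m.
Proof.
case=> uniq_vis le_j def_n none; rewrite ltn_neqAle le_j andbT; apply/eqP=> eq_j.
have all_vis k : k \in vis.
  apply: (visited_of_reached none (t := m)); move/forallP: oforestF => /(_ k).
  by case: (iter m (ostep F) (inr k)) => [r|] //= _; rewrite eq_j -ltnS ltn_ord.
have : m <= size vis.
  by have := @uniq_leq_size _ (enum 'I_m) vis (enum_uniq _); rewrite size_enum_ord; apply.
lia.
Qed.

Lemma psearch_step d j vis : search_inv d.+1 j vis -> exists x j' vis',
  [/\ psearch F d.+1 j vis = x :: psearch F d j' vis', search_inv d j' vis',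
   forall y, reached j' vis' y = reached j vis y || (y == x),
   forall k, (k \in vis') = (k \in vis) || (x == inr k) &
   j' = j + is_inl x /\
   match x with
   | inr k0 => ready F j vis k0 /\ forall k, ready F j vis k -> k0 <= k
   | inl r => (forall k, ~~ ready F j vis k) /\ r = j.+1 :> nat
   end].
Proof.
move=> inv; have [uniq_vis le_j def_n] := inv.
case: (pickP (ready F j vis)) => [k1 ready_k1|none]; last first.
  have {}none k : ~~ ready F j vis k by rewrite none.
  have lt_j := search_read_lt inv none.
  exists (inl (inord j.+1)), j.+1, vis; rewrite psearch_read //.
  split=> //; first by split=> //; lia.
  - case=> [r|k] /=; last by rewrite orbF.
    have -> : (inl r == inl (inord j.+1) :> onode n m) = (val r == j.+1).
      apply/eqP/eqP => [[->]|eq_r]; first by apply: inordK; lia.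
      by congr inl; apply: val_inj; rewrite /= eq_r inordK //; lia.
    by rewrite [in LHS]leq_eqVlt ltnS orbC.
  - by move=> k; rewrite orbF.
  - by split; [rewrite addn1 | split=> //; apply: inordK; lia].
case: (arg_minnP (fun k : 'I_m => val k) ready_k1) => k0 ready_k0 k0_min.
exists (inr k0), j, (k0 :: vis); rewrite (psearch_visit _ ready_k0 k0_min).
have k0_notin : k0 \notin vis by case/andP: ready_k0.
split=> //.
- by split; rewrite /= ?k0_notin ?uniq_vis //; rewrite /= in def_n; lia.
- by case=> [r|k] /=; rewrite ?orbF // in_cons orbC.
- by move=> k; rewrite in_cons orbC eq_sym.
- by rewrite addn0.
Qed.

Lemma size_psearch d j vis : size (psearch F d j vis) = d.
Proof.
elim: d j vis => //= d IH j vis.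
by case: pickP => [k _|_] /=; rewrite IH.
Qed.

Lemma mem_psearch d j vis : search_inv d j vis ->
  forall k, (inr k \in psearch F d j vis) = (k \notin vis).
Proof.
elim: d j vis => [|d IH] j vis inv k.
  case: inv => uniq_vis le_j def_n; rewrite in_nil; apply/esym/negbTE/negPn.
  have size_vis : size vis = m by have := size_uniq_ord uniq_vis; lia.
  have sub_vis : {subset vis <= enum 'I_m} by move=> k' _; rewrite mem_enum.
  have [|_ ->] := uniq_min_size uniq_vis sub_vis; last by rewrite mem_enum.
  by rewrite size_enum_ord size_vis.
have [x [j' [vis' [-> inv' _ visE [_ x_spec]]]]] := psearch_step inv.
rewrite in_cons IH // visE negb_or eq_sym.
case: x x_spec {visE} => [r|k0] /=; first by rewrite andbT.
case=> [ready_k0 _]; case: (k0 =P k) => [<-|ne_k0k].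
  by rewrite eqxx; case/andP: ready_k0 => ->.
have -> : (inr k0 == inr k :> onode n m) = false by apply/eqP=> -[].
by rewrite andbT.
Qed.

Lemma nth_psearch_inl d j vis : search_inv d j vis -> forall t r,
  t < d -> nth (inl ord0) (psearch F d j vis) t = inl r ->
  r = j + 1 + count (@is_inl n m) (take t (psearch F d j vis)) :> nat.
Proof.
elim: d j vis => [//|d IH] j vis inv t r.
have [x [j' [vis' [-> inv' _ _ [def_j' x_spec]]]]] := psearch_step inv.
case: t => [|t] /= lt_td.
  by move=> def_x; rewrite def_x in x_spec; case: x_spec => _ ->; lia.
by move=> E; rewrite (IH _ _ inv' _ _ lt_td E) def_j'; lia.
Qed.

Lemma uniq_psearch d j vis : search_inv d j vis -> uniq (psearch F d j vis).
Proof.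
elim: d j vis => [//|d IH] j vis inv.
have [x [j' [vis' [-> inv' _ visE [def_j' x_spec]]]]] := psearch_step inv.
rewrite /= IH // andbT.
case: x x_spec visE def_j' => [r|k0] /= x_spec visE def_j'; last first.
  by rewrite mem_psearch // visE eqxx orbT.
apply/negP=> r_in.
have lt_r : index (inl r) (psearch F d j' vis') < d.
  by rewrite -[X in _ < X](size_psearch d j' vis') index_mem.
by have := nth_psearch_inl inv' lt_r (nth_index _ r_in); case: x_spec => _ ->; lia.
Qed.

Lemma nth_psearch_parent d j vis : search_inv d j vis -> forall t k,
  t < d -> nth (inl ord0) (psearch F d j vis) t = inr k ->
  reached j vis (F k) || (F k \in take t (psearch F d j vis)).
Proof.
elim: d j vis => [//|d IH] j vis inv t k.
have [x [j' [vis' [-> inv' reachedE _ [_ x_spec]]]]] := psearch_step inv.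
case: t => [|t] /= lt_td.
  by move=> def_x; rewrite def_x in x_spec; case: x_spec => /andP[_ ->].
move=> E; have := IH _ _ inv' _ _ lt_td E; rewrite reachedE in_cons.
by case/orP=> [/orP[->|->]|->]; rewrite ?orbT.
Qed.

(* At step [u] the vertex [k] is already unblocked, so the vertex visited
   then has a smaller label. *)
Lemma nth_psearch_priority d j vis : search_inv d j vis -> forall t u k,
  t < d -> nth (inl ord0) (psearch F d j vis) t = inr k -> u < t ->
  reached j vis (F k) || (F k \in take u (psearch F d j vis)) ->
  exists2 k2, nth (inl ord0) (psearch F d j vis) u = inr k2 & k2 < k.
Proof.
elim: d j vis => [//|d IH] j vis inv t u k.
have [x [j' [vis' [-> inv' reachedE visE [_ x_spec]]]]] := psearch_step inv.
case: t => [//|t] /= lt_td E.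
have : inr k \in psearch F d j' vis' by rewrite -E mem_nth // size_psearch.
rewrite (mem_psearch inv') visE negb_or => /andP[k_notin ne_xk].
case: u => [|u] /= lt_ut.
  rewrite orbF => reach_k; have ready_k : ready F j vis k by rewrite /ready k_notin.
  case: x x_spec ne_xk {reachedE visE} => [r [/(_ k)]|k0 [_ /(_ k ready_k) le_k0k] ne_k0k].
    by rewrite ready_k.
  exists k0 => //; rewrite ltn_neqAle le_k0k andbT.
  by apply: contra ne_k0k => /eqP/val_inj ->.
rewrite in_cons => reach_k; apply: (IH _ _ inv' t) => //.
by rewrite reachedE; case/orP: reach_k => [->|/orP[/eqP ->|->]]; rewrite ?eqxx ?orbT.
Qed.

End PrioritySearch.

Section VisitOrder.
Variables (n m : nat) (F : oforest n m).
Hypotheses (le_mn : m <= n) (oforestF : is_oforest F).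

Let order := porder F.

Let search_inv0 : search_inv n n 0 (@nil 'I_m).
Proof. by split=> //; rewrite add0n. Qed.

Definition visit_label (x : onode n m) := if x == inl ord0 then 0 else (index x order).+1.
Definition visit_pos (k : 'I_m) := (index (inr k) order).+1.
Definition visit_vertex (k : 'I_m) : 'I_n.+1 := inord (visit_pos k).
Definition visit_word := [seq visit_vertex k | k <- enum 'I_m].

Lemma size_porder : size order = n.
Proof. exact: size_psearch. Qed.

Lemma uniq_porder : uniq order.
Proof. exact: uniq_psearch search_inv0. Qed.

Lemma mem_porder k : inr k \in order.
Proof. by rewrite /order /porder (mem_psearch le_mn oforestF search_inv0). Qed.

Lemma index_porder_lt x : x \in order -> index x order < n.
Proof. by move=> x_in; have := index_mem x order; rewrite x_in size_porder. Qed.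

Lemma visit_pos_le k : visit_pos k <= n.
Proof. exact: index_porder_lt (mem_porder k). Qed.

Lemma val_visit_vertex k : visit_vertex k = visit_pos k :> nat.
Proof. by rewrite /visit_vertex inordK // ltnS visit_pos_le. Qed.

Lemma visit_vertex_nth u k : u < n -> nth (inl ord0) order u = inr k ->
  visit_vertex k = inord u.+1.
Proof.
move=> lt_un E; rewrite /visit_vertex /visit_pos; congr (inord _.+1).
by rewrite -E index_uniq ?size_porder ?uniq_porder.
Qed.

Lemma visit_vertex_inj : injective visit_vertex.
Proof.
move=> k k' /(congr1 val); rewrite /= !val_visit_vertex => -[E].
have : inr k = inr k' :> onode n m by apply: (index_inj (inl ord0)) E; apply: mem_porder.
by case.
Qed.

Lemma prio_forestE (i : 'I_n.+1) : prio_forest F i =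
  if i == 0 :> nat then None else
  if nth (inl ord0) order i.-1 is inr k then Some (inord (visit_label (F k))) else None.
Proof. by rewrite /prio_forest ffunE; case: ifP. Qed.

Lemma visit_label_parent_lt k : visit_label (F k) < visit_pos k.
Proof.
have lt_k := index_porder_lt (mem_porder k).
have := nth_psearch_parent le_mn oforestF search_inv0 lt_k (nth_index _ (mem_porder k)).
rewrite -/order /visit_label /visit_pos; case E: (F k) => [r|k'] /=; last first.
  by rewrite ltnS; apply: index_ltn.
case/orP=> [r0|r_in]; last by case: ifP => // _; rewrite ltnS; apply: index_ltn.
by rewrite (_ : r = ord0) //; apply: val_inj; move: r0; rewrite /= leqn0 => /eqP.
Qed.

Lemma visit_label_parent_bound k : visit_label (F k) < n.+1.
Proof. by rewrite ltnS; apply: leq_trans (ltnW (visit_label_parent_lt k)) (visit_pos_le k). Qed.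

Lemma prio_forest_visit_vertex k :
  prio_forest F (visit_vertex k) = Some (inord (visit_label (F k))).
Proof. by rewrite prio_forestE val_visit_vertex /visit_pos /= nth_index ?mem_porder. Qed.

Lemma prio_forest_parent i p : prio_forest F i = Some p ->
  exists k, i = visit_vertex k /\ p = inord (visit_label (F k)).
Proof.
rewrite prio_forestE; case: eqP => // i_neq0.
case E: (nth _ _ _) => [r|k] // [<-]; exists k; split=> //.
rewrite (visit_vertex_nth _ E); last by have := ltn_ord i; lia.
by apply: val_inj; rewrite /= inordK prednK //; lia.
Qed.

Lemma visit_between k (r : 'I_n.+1) : visit_label (F k) < r -> r < visit_pos k ->
  exists2 k2, r = visit_vertex k2 & k2 < k.
Proof.
move=> lt_parent_r lt_r_k; set t := index (inr k) order.
have lt_tn : t < n := index_porder_lt (mem_porder k).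
have lt_rt : r.-1 < t by rewrite /visit_pos -/t in lt_r_k; lia.
have parent_avail : reached 0 [::] (F k) || (F k \in take r.-1 order).
  have := nth_psearch_parent le_mn oforestF search_inv0 lt_tn (nth_index _ (mem_porder k)).
  rewrite -/order -/t; case/orP=> [->//|parent_in].
  case: (F k =P inl ord0) => [->//|parent_neq0]; apply/orP; right.
  rewrite in_take ?(mem_take parent_in) //.
  by move: lt_parent_r; rewrite /visit_label (introF eqP parent_neq0); lia.
have [k2 E lt_k2k] := nth_psearch_priority le_mn oforestF search_inv0 lt_tn
  (nth_index _ (mem_porder k)) lt_rt parent_avail.
exists k2 => //; rewrite (visit_vertex_nth _ E); last by lia.
by apply: val_inj; rewrite /= inordK prednK //; lia.
Qed.

Lemma nth_visit_word (k : 'I_m) : nth ord0 visit_word k = visit_vertex k.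
Proof. by rewrite (nth_map k) ?size_enum_ord ?ltn_ord // nth_ord_enum. Qed.

Lemma visit_word_admissible : admissible m (prio_forest F) visit_word.
Proof.
have val_label k : (inord (visit_label (F k)) : 'I_n.+1) = visit_label (F k) :> nat.
  exact: inordK (visit_label_parent_bound k).
split.
- move=> i p /prio_forest_parent [k [-> ->]]; split.
    by rewrite val_label val_visit_vertex visit_label_parent_lt.
  move=> r; rewrite val_label val_visit_vertex => lt_pr lt_rk.
  by have [k2 -> _] := visit_between lt_pr lt_rk; rewrite prio_forest_visit_vertex.
- by rewrite size_map size_enum_ord.
- by rewrite map_inj_uniq ?enum_uniq //; apply: visit_vertex_inj.
- move=> i; apply/idP/idP.
    case E: (prio_forest F i) => [p|] // _; have [k [-> _]] := prio_forest_parent E.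
    by apply: map_f; rewrite mem_enum.
  by case/mapP=> k _ ->; rewrite prio_forest_visit_vertex.
move=> k lt_km p; rewrite (nth_visit_word (Ordinal lt_km)) prio_forest_visit_vertex => -[<-] r.
rewrite val_label val_visit_vertex => lt_pr lt_rk.
have [k2 -> lt_k2k] := visit_between lt_pr lt_rk.
by rewrite -map_take; apply: map_f; rewrite in_take ?mem_enum // index_enum_ord.
Qed.

Lemma roots_below_prio_forest u : u < n ->
  roots_below (prio_forest F) u.+1 = 1 + count (@is_inl n m) (take u order).
Proof.
elim: u => [|u IH] lt_un.
  by rewrite roots_belowS // roots_below0 take0 prio_forestE inordK.
rewrite roots_belowS; last by lia.
rewrite IH; last by lia.
rewrite (take_nth (inl ord0)) ?size_porder; last by lia.
rewrite -cats1 count_cat prio_forestE inordK; last by lia.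
by rewrite /= -addnA; case: (nth _ _ _) => [r|k]; rewrite /= ?addn0.
Qed.

Lemma visited_parent k : F k = inl ord0 \/ F k \in order.
Proof.
have lt_k := index_porder_lt (mem_porder k).
have := nth_psearch_parent le_mn oforestF search_inv0 lt_k (nth_index _ (mem_porder k)).
case/orP=> [|/mem_take]; last by right.
case: (F k) => [r|//] /=; rewrite leqn0 => /eqP r0.
by left; congr inl; apply: val_inj.
Qed.

Lemma onode_of_visit_label x : x = inl ord0 \/ x \in order ->
  onode_of m (prio_forest F) visit_word (inord (visit_label x)) = x.
Proof.
have adm := visit_word_admissible.
case: (x =P inl ord0) => [->|x_neq0] x_in.
  rewrite /visit_label eqxx (_ : inord 0 = ord0); last exact/val_inj/inordK.
  exact: onode_of0 adm.
have {}x_in : x \in order by case: x_in.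
case: x x_in x_neq0 => [r|k] x_in x_neq0; last first.
  rewrite /visit_label (introF eqP x_neq0) -/(visit_pos k) -(val_visit_vertex k).
  by rewrite inord_val -nth_visit_word (onode_of_nth adm).
set u := index (inl r) order.
have lt_un := index_porder_lt x_in.
have nth_u : nth (inl ord0) order u = inl r by rewrite nth_index.
have -> : visit_label (inl r) = u.+1 by rewrite /visit_label (introF eqP x_neq0).
have u_notin : (inord u.+1 : 'I_n.+1) \notin visit_word.
  by rewrite -(admissible_nonroot adm) negbK prio_forestE inordK //= nth_u.
have roots_u : roots_below (prio_forest F) u.+1 = r.
  by rewrite roots_below_prio_forest // (nth_psearch_inl le_mn oforestF search_inv0 lt_un nth_u).
by rewrite (onode_of_root adm u_notin) inordK // roots_u inord_val.
Qed.

Lemma relabel_prio_forest : relabel m (prio_forest F) visit_word = F.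
Proof.
apply/ffunP=> k.
have E : prio_forest F (nth ord0 visit_word k) = Some (inord (visit_label (F k))).
  by rewrite nth_visit_word prio_forest_visit_vertex.
by rewrite (relabelE visit_word_admissible E) onode_of_visit_label //; apply: visited_parent.
Qed.

End VisitOrder.

(** * The bijection *)

Lemma omap_val_insub m x :
  omap val (insub x : option 'I_m) = if x < m then Some x else None.
Proof. by case: insubP => [u lt_xm val_u|/negbTE ->] /=; rewrite ?lt_xm -?val_u. Qed.

Lemma pinv_inj n m (l1 l2 : seq 'I_n.+1) : size l1 = m -> size l2 = m -> uniq l1 ->
  ord0 \notin l1 -> pinv m l1 = pinv m l2 -> l1 = l2.
Proof.
move=> size1 size2 uniq1 l1_neq0 pinv_eq.
apply: (@eq_from_nth _ ord0); first by rewrite size1 size2.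
move=> k lt_k1; set j := nth ord0 l1 k.
have j_in : j \in l1 by rewrite mem_nth.
have j_gt0 : 0 < j.
  by rewrite lt0n; apply: contraNneq l1_neq0 => j0; rewrite -(_ : j = ord0) //; exact: val_inj.
have lt_jn : j.-1 < n by have := ltn_ord j; lia.
have nth_pinv l : nth None (pinv m l) j.-1 = if j \in l then insub (index j l) else None.
  rewrite (nth_map ord0) ?size_map ?size_iota // (nth_map 0) ?size_iota // nth_iota //.
  by rewrite add1n prednK // inord_val.
have := congr1 (fun s => omap val (nth None s j.-1)) pinv_eq; rewrite /= !nth_pinv j_in.
rewrite omap_val_insub index_uniq // -size1 lt_k1.
case: (boolP (j \in l2)) => j_in2 //; rewrite omap_val_insub; case: ifP => // _ [k_idx].
by rewrite -/j k_idx nth_index.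
Qed.

Lemma chain_inj n m (C1 C2 : seq (forest n)) : is_chain n m C1 -> is_chain n m C2 ->
  chain_top m C1 = chain_top m C2 -> pinv m (JH m C1) = pinv m (JH m C2) -> C1 = C2.
Proof.
move=> chain1 chain2 top_eq pinv_eq; have adm1 := chain_admissible chain1.
have JH_eq : JH m C1 = JH m C2.
  apply: pinv_inj pinv_eq; rewrite ?size_JH //; first exact: admissible_uniq adm1.
  exact: ord0_notin_lam adm1.
by rewrite (chain_prefix_chain chain1) (chain_prefix_chain chain2) top_eq JH_eq.
Qed.

Lemma phi_spec_chain_inj n m (psi1 psi2 : seq (forest n) -> oforest n m) :
  phi_spec psi1 -> phi_spec psi2 -> forall C1 C2, is_chain n m C1 -> is_chain n m C2 ->
  psi1 C1 = psi2 C2 -> C1 = C2.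
Proof.
move=> spec1 spec2 C1 C2 chain1 chain2 psi_eq.
have [top1 trav1] := spec1 C1 chain1; have [top2 trav2] := spec2 C2 chain2.
by apply: chain_inj chain1 chain2 _ _; rewrite -?top1 -?top2 -?trav1 -?trav2 psi_eq.
Qed.

Lemma phi_relabel n m C : phi n m C = relabel m (chain_top m C) (JH m C).
Proof. by []. Qed.

Lemma phi_spec_phi n m : phi_spec (phi n m).
Proof.
move=> C chainC; have adm := chain_admissible chainC.
by rewrite phi_relabel prio_forest_relabel // prio_traversal_relabel.
Qed.

Lemma phi_is_oforest n m C : is_chain n m C -> is_oforest (phi n m C).
Proof. by move=> chainC; apply: is_oforest_relabel (chain_admissible chainC). Qed.

Lemma phi_onto n m : m <= n ->
  forall F, is_oforest F -> exists2 C, is_chain n m C & phi n m C = F.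
Proof.
move=> le_mn F oforestF; have adm := visit_word_admissible le_mn oforestF.
exists (prefix_chain m (prio_forest F) (visit_word F)); first exact: prefix_chain_is_chain.
by rewrite phi_relabel prefix_chain_top // prefix_chain_JH // relabel_prio_forest.
Qed.

Theorem theorem3p4 (n m : nat) (hmn : m <= n) :
  bij_chains_oforests (phi n m) /\ phi_spec (phi n m) /\
  (forall psi : seq (forest n) -> oforest n m,
     bij_chains_oforests psi -> phi_spec psi ->
     forall C, is_chain n m C -> psi C = phi n m C).
Proof.
have spec := @phi_spec_phi n m.
have inj : {in is_chain n m &, injective (phi n m)}.
  by move=> C1 C2; apply: phi_spec_chain_inj.
split; first by split; [apply: phi_is_oforest | apply: inj | apply: phi_onto].
split=> // psi [oforest_psi _ _] spec_psi C chainC.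
have [C' chainC' phiC'] := phi_onto hmn (oforest_psi C chainC).
by rewrite -phiC' (phi_spec_chain_inj spec_psi spec chainC chainC' (esym phiC')).
Qed.
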